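(* In the reinforcement-learning network model described in the context, for every $\varepsilon>0$ there is a constant $C>0$ depending only on $(a_{kl})_{k,l\in\mathbb{V}}$ and $\varepsilon$ such that, for all $i,j\in\mathbb{V}$ with $i\sim j$ and all $n$ with $T_n\ge C$: if $x_n\in U_{ij}(\varepsilon)$ and $|H(x_{n+1})-H(x_n)|<\varepsilon/2$, then $x_{n+1}\in U_{ij}(2\varepsilon)$.
   Context: Let $G=(\mathbb{V},E)$ be a finite graph with adjacency $\sim$. Let $a_{ij}=a_{ji}\ge0$, $>0$ only if $i\sim j$. Let $(p_W)_{W\subseteq\mathbb{V}}$ be nonnegative with $\sum_Wp_W=1$; for $i\sim j$, $p_{ij}=\sum_{W:i,j\in W}p_W$; $p_{ij}=0$ if $i\not\sim j$. Assume some $a_{ij}p_{ij}>0$. Let $v^0_{ij}=v^0_{ji}\ge0$, $>0$ iff $i\sim j$. Process: $V^0_{ij}=v^0_{ij}$, $V^n_{ij}=0$ if $i\not\sim j$, $V^n_i=\sum_jV^n_{ij}$; at each time $n$ each vertex $i$ independently chooses a neighbour $j$ with probability $V^n_{ij}/V^n_i$; independently Nature picks $W_n$ with $\mathbb{P}(W_n=W)=p_W$, i.i.d.; if $i,j\in W_n$, $i\sim j$ and $i,j$ choose each other, then $V^{n+1}_{ij}=V^{n+1}_{ji}=V^n_{ij}+a_{ij}$, else unchanged. Let $T_n=\sum_{i,j}V^n_{ij}$ (ordered pairs), $x^n_{ij}=V^n_{ij}/T_n$, $x_n=(x^n_{ij})$. Let $h_1=\sum_{(i,j):a_{ij}p_{ij}>0}v^0_{ij}/\sum_{k,l}v^0_{kl}$;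 $\Delta$ is the set of arrays $x$ with $x_{ij}=x_{ji}\ge0$, $x_{ij}=0$ if $i\not\sim j$, $\sum_{i,j}x_{ij}=1$, $\sum_{(i,j):a_{ij}p_{ij}>0}x_{ij}\ge h_1$; $x_i=\sum_jx_{ij}$. $H(x)=\sum_{(i,j):x_{ij}>0}a_{ij}p_{ij}x_{ij}^2/(x_ix_j)$; for $x_{ij}>0$, $y_{ij}=a_{ij}p_{ij}x_{ij}/(x_ix_j)$. For $\varepsilon>0$, $U_{ij}(\varepsilon)=\{x\in\Delta:\ x_{ij}<\varepsilon\ \text{or}\ y_{ij}-H(x)\ge-\varepsilon\}$. *)

From mathcomp Require Import all_boot all_order all_algebra.
Set Implicit Arguments. Unset Strict Implicit. Unset Printing Implicit Defensive.
Import Order.TTheory GRing.Theory Num.Theory.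
Local Open Scope ring_scope.

Section Defs.
Variables (R : realFieldType) (T : finType).

Definition pedge (adj : rel T) (p : {ffun {set T} -> R}) (i j : T) : R :=
  if adj i j then \sum_(W : {set T} | (i \in W) && (j \in W)) p W else 0.

Definition total_mass (V : T -> T -> R) : R := \sum_(i : T) \sum_(j : T) V i j.

Definition normalize (V : T -> T -> R) : T -> T -> R :=
  fun i j => V i j / total_mass V.

Definition rowsum (x : T -> T -> R) (i : T) : R := \sum_(j : T) x i j.

Definition Hfun (adj : rel T) (a : T -> T -> R) (p : {ffun {set T} -> R})
  (x : T -> T -> R) : R :=
  \sum_(i : T) \sum_(j : T)
     (if 0 < x i j then
        a i j * pedge adj p i j * x i j ^+ 2 / (rowsum x i * rowsum x j)
      else 0).

Definition yfun (adj : rel T) (a : T -> T -> R) (p : {ffun {set T} -> R})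
  (x : T -> T -> R) (i j : T) : R :=
  a i j * pedge adj p i j * x i j / (rowsum x i * rowsum x j).

Definition active_mass (adj : rel T) (a : T -> T -> R) (p : {ffun {set T} -> R})
  (x : T -> T -> R) : R :=
  \sum_(i : T) \sum_(j : T) (if 0 < a i j * pedge adj p i j then x i j else 0).

Definition h1 (adj : rel T) (a : T -> T -> R) (p : {ffun {set T} -> R})
  (v0 : T -> T -> R) : R := active_mass adj a p v0 / total_mass v0.

Definition inDelta (adj : rel T) (a : T -> T -> R) (p : {ffun {set T} -> R})
  (v0 : T -> T -> R) (x : T -> T -> R) : Prop :=
  [/\ (forall i j, x i j = x j i),
      (forall i j, 0 <= x i j),
      (forall i j, ~~ adj i j -> x i j = 0),
      total_mass x = 1 &
      h1 adj a p v0 <= active_mass adj a p x].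

Definition Uset (adj : rel T) (a : T -> T -> R) (p : {ffun {set T} -> R})
  (v0 : T -> T -> R) (i j : T) (eps : R) (x : T -> T -> R) : Prop :=
  inDelta adj a p v0 x /\
  (x i j < eps \/ - eps <= yfun adj a p x i j - Hfun adj a p x).

(* One possible (positive-probability) step of the process: Nature picks W
   with p_W > 0, each vertex i chooses a neighbour c i (when it has one);
   edges {k,l} inside W whose endpoints chose each other get reinforced. *)
Definition step (adj : rel T) (a : T -> T -> R) (p : {ffun {set T} -> R})
  (V V' : T -> T -> R) : Prop :=
  exists W : {set T}, 0 < p W /\
  exists c : T -> T,
    (forall i, (exists j, adj i j) -> adj i (c i)) /\
    (forall k l, V' k l = V k l +
       (if [&& adj k l, k \in W, l \in W, c k == l & c l == k]
        then a k l else 0)).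

Definition is_path (adj : rel T) (a : T -> T -> R) (p : {ffun {set T} -> R})
  (v0 : T -> T -> R) (V : nat -> T -> T -> R) : Prop :=
  (forall k l, V 0%N k l = v0 k l) /\
  (forall n, step adj a p (V n) (V n.+1)).

End Defs.

From mathcomp Require Import all_boot all_order all_algebra.
From mathcomp Require Import ring lra.
Import Order.TTheory GRing.Theory Num.Theory.
Local Open Scope ring_scope.

(* Write S for the total mass of a and t for T_n; one step adds at most
   a_kl <= S to each entry, hence at most S to each row sum and to t.
   If x_ij < eps then x_ij increases by at most S / t <= eps.  Otherwise
   V_ij >= eps t, and y_ij = a_ij p_ij V_ij t / (V_i V_j) can only decrease
   through the growth of the row sums V_i, V_j by at most S; since
   V_i, V_j >= V_ij >= eps t, this loss is at most 2 S^2 / (eps^2 t), which is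
   below eps / 2 once t >= 4 S^2 / eps^3.  Together with the assumed change of
   less than eps / 2 in H, y_ij - H drops by less than eps.  Hence
   C = 1 + S / eps + 4 S^2 / eps^3 works.  Membership in Delta persists
   because reinforcements only fall on edges with a_kl p_kl > 0. *)

Section RealInequalities.
Context {R : realFieldType}.
Implicit Types a b s c v t eps : R.

Lemma invM_sub_shift_le {a b s} : 0 < a -> 0 < b -> 0 <= s ->
  (a * b)^-1 - ((a + s) * (b + s))^-1 <= s * (a + b) / (a * b) ^+ 2.
Proof.
move=> a0 b0 s0.
have ab0 : 0 < a * b by rewrite mulr_gt0.
have Q0 : 0 < (a + s) * (b + s) by rewrite mulr_gt0 // ltr_wpDr.
have -> : (a * b)^-1 - ((a + s) * (b + s))^-1
          = s * (a + b + s) / (a * b * ((a + s) * (b + s))).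
  by field; rewrite !gt_eqF // ?ltr_wpDr.
have -> : s * (a + b) / (a * b) ^+ 2
          = s * (a + b) * ((a + s) * (b + s)) / (a * b) / (a * b * ((a + s) * (b + s))).
  by field; rewrite !gt_eqF // ?ltr_wpDr.
rewrite ler_pM2r ?invr_gt0 ?mulr_gt0 // ?ltr_wpDr // ler_pdivlMr //.
rewrite -subr_ge0.
have -> : s * (a + b) * ((a + s) * (b + s)) - s * (a + b + s) * (a * b)
          = s ^+ 2 * (a ^+ 2 + a * b + b ^+ 2 + s * (a + b)) by ring.
by rewrite mulr_ge0 ?exprn_ge0 // !addr_ge0 ?mulr_ge0 ?exprn_ge0 ?addr_ge0 // ltW.
Qed.

Lemma ratio_drop_le {c v t a b s eps} :
  0 < eps -> 0 <= c -> c <= s -> 0 < t -> eps * t <= v -> v <= a -> v <= b ->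
  4 * s ^+ 2 / eps ^+ 3 <= t ->
  c * v * t / (a * b) - c * v * t / ((a + s) * (b + s)) <= eps / 2.
Proof.
move=> e0 c0 cs t0 etv va vb ts.
have et0 : 0 < eps * t by rewrite mulr_gt0.
have a0 : 0 < a by apply: lt_le_trans va; apply: lt_le_trans etv.
have b0 : 0 < b by apply: lt_le_trans vb; apply: lt_le_trans etv.
have s0 : 0 <= s := le_trans c0 cs.
move: (ltW e0) (ltW t0) (ltW a0) (ltW b0) (ltW et0) => e0W t0W a0W b0W et0W.
have v0W : 0 <= v := le_trans et0W etv.
have cvt0 : 0 <= c * v * t by rewrite !mulr_ge0.
rewrite -mulrBr; apply: le_trans (ler_wpM2l cvt0 (invM_sub_shift_le a0 b0 s0)) _.
rewrite mulrA ler_pdivrMr ?exprn_gt0 ?mulr_gt0 //.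
have h1 : c * v * t * (s * (a + b)) <= s ^+ 2 * t * (v * (a + b)).
  rewrite -subr_ge0 (_ : _ - _ = (s - c) * (s * t * (v * (a + b)))); last by ring.
  by rewrite !mulr_ge0 ?subr_ge0 ?addr_ge0.
have h2 : v * (a + b) <= 2 * (a * b).
  have : v * a <= b * a by rewrite ler_pM2r.
  have : v * b <= a * b by rewrite ler_pM2r.
  rewrite [b * a]mulrC; lra.
have h3 : 4 * s ^+ 2 <= eps ^+ 3 * t.
  by move: ts; rewrite ler_pdivrMr ?exprn_gt0 // [t * _]mulrC.
have h4 : (eps * t) ^+ 2 <= a * b.
  by rewrite expr2 ler_pM // ?(le_trans etv va) ?(le_trans etv vb).
have st0 : 0 <= s ^+ 2 * t by rewrite mulr_ge0 ?exprn_ge0.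
have tab0 : 0 <= t * (a * b) / 2 by rewrite !mulr_ge0 ?invr_ge0.
have eab0 : 0 <= eps * (a * b) / 2 by rewrite !mulr_ge0 ?invr_ge0.
apply: le_trans h1 _; apply: le_trans (ler_wpM2l st0 h2) _.
rewrite (_ : _ * (2 * _) = 4 * s ^+ 2 * (t * (a * b) / 2)); last by field.
apply: le_trans (ler_wpM2r tab0 h3) _.
rewrite (_ : _ * (t * _ / 2) = (eps * t) ^+ 2 * (eps * (a * b) / 2)); last by field.
apply: le_trans (ler_wpM2r eab0 h4) _.
by rewrite le_eqVlt; apply/orP; left; apply/eqP; field.
Qed.

Lemma ratio_le_shift {c v v' t t' a b a' b' s} :
  0 <= c -> 0 <= v -> v <= v' -> 0 <= t -> t <= t' ->
  0 < a' -> a' <= a + s -> 0 < b' -> b' <= b + s ->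
  c * v * t / ((a + s) * (b + s)) <= c * v' * t' / (a' * b').
Proof.
move=> c0 v0 vv' t0 tt' a'0 a'a b'0 b'b.
have a'b'0 : 0 < a' * b' by rewrite mulr_gt0.
apply: ler_pM.
- by rewrite !mulr_ge0.
- by rewrite invr_ge0 (le_trans (ltW a'b'0)) // ler_pM // ltW.
- by apply: ler_pM; rewrite ?mulr_ge0 ?ler_wpM2l.
- by rewrite lef_pV2 ?posrE ?(lt_le_trans a'b'0) ?ler_pM // ltW.
Qed.

End RealInequalities.

Section Arrays.
Context {R : realFieldType} {T : finType}.
Implicit Types (V D : T -> T -> R) (adj : rel T) (a : T -> T -> R)
  (p : {ffun {set T} -> R}).

Lemma total_mass_ge0 V : (forall k l, 0 <= V k l) -> 0 <= total_mass V.
Proof. by move=> V0; rewrite sumr_ge0 // => k _; rewrite sumr_ge0. Qed.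

Lemma entry_le_rowsum V k l : (forall i j, 0 <= V i j) -> V k l <= rowsum V k.
Proof. by move=> V0; rewrite /rowsum (bigD1 l) //= lerDl sumr_ge0. Qed.

Lemma rowsum_le_total_mass V k : (forall i j, 0 <= V i j) ->
  rowsum V k <= total_mass V.
Proof.
move=> V0; rewrite /total_mass (bigD1 k) //= lerDl sumr_ge0 // => i _.
exact: sumr_ge0.
Qed.

Lemma entry_le_total_mass V k l : (forall i j, 0 <= V i j) ->
  V k l <= total_mass V.
Proof.
by move=> V0; apply: le_trans (entry_le_rowsum V k l V0) (rowsum_le_total_mass V k V0).
Qed.

Lemma total_mass_add V V' D : (forall k l, V' k l = V k l + D k l) ->
  total_mass V' = total_mass V + total_mass D.
Proof.
move=> HV; rewrite /total_mass -big_split; apply: eq_bigr => k _.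
by rewrite -big_split; apply: eq_bigr => l _.
Qed.

Lemma rowsum_add V V' D k : (forall k l, V' k l = V k l + D k l) ->
  rowsum V' k = rowsum V k + rowsum D k.
Proof. by move=> HV; rewrite /rowsum -big_split; apply: eq_bigr => l _. Qed.

Lemma normalizeK V k l : total_mass V != 0 -> normalize V k l * total_mass V = V k l.
Proof. by move=> t0; rewrite /normalize divfK. Qed.

Lemma total_mass_normalize V : total_mass V != 0 -> total_mass (normalize V) = 1.
Proof.
move=> t0; rewrite /total_mass /normalize -[RHS](divff t0) mulr_suml.
by apply: eq_bigr => k _; rewrite mulr_suml.
Qed.

Lemma rowsum_normalize V k : rowsum (normalize V) k = rowsum V k / total_mass V.
Proof. by rewrite /rowsum /normalize mulr_suml. Qed.

Lemma active_mass_normalize adj a p V :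
  active_mass adj a p (normalize V) = active_mass adj a p V / total_mass V.
Proof.
rewrite /active_mass mulr_suml; apply: eq_bigr => k _.
by rewrite mulr_suml; apply: eq_bigr => l _; case: ifP; rewrite ?mul0r.
Qed.

Lemma yfun_normalize adj a p V i j :
  total_mass V != 0 -> rowsum V i != 0 -> rowsum V j != 0 ->
  yfun adj a p (normalize V) i j =
  a i j * pedge adj p i j * V i j * total_mass V / (rowsum V i * rowsum V j).
Proof.
by move=> t0 ri rj; rewrite /yfun !rowsum_normalize /normalize; field; rewrite t0 ri rj.
Qed.

Lemma pedge_ge0 adj p i j : (forall W, 0 <= p W) -> 0 <= pedge adj p i j.
Proof. by move=> p0; rewrite /pedge; case: ifP => // _; rewrite sumr_ge0. Qed.

Lemma pedge_le1 adj p i j : (forall W, 0 <= p W) -> \sum_W p W = 1 ->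
  pedge adj p i j <= 1.
Proof.
move=> p0 p1; rewrite /pedge; case: ifP => // _.
by rewrite -p1 big_mkcond /=; apply: ler_sum => W _; case: ifP.
Qed.

End Arrays.

Definition reinforcement {R : realFieldType} {T : finType} (adj : rel T)
    (a : T -> T -> R) (W : {set T}) (c : T -> T) (k l : T) : R :=
  if [&& adj k l, k \in W, l \in W, c k == l & c l == k] then a k l else 0.

Section Reinforcement.
Context {R : realFieldType} {T : finType} {adj : rel T} {a : T -> T -> R}.
Context {p : {ffun {set T} -> R}} {W : {set T}} {c : T -> T}.
Hypotheses (adj_sym : symmetric adj) (a_sym : forall k l, a k l = a l k)
  (a_ge0 : forall k l, 0 <= a k l).
Local Notation reinforcement := (reinforcement adj a W c).

Lemma reinforcement_ge0 k l : 0 <= reinforcement k l.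
Proof. by rewrite /reinforcement; case: ifP. Qed.

Lemma reinforcement_le k l : reinforcement k l <= a k l.
Proof. by rewrite /reinforcement; case: ifP. Qed.

Lemma reinforcement_sym k l : reinforcement k l = reinforcement l k.
Proof.
rewrite /reinforcement adj_sym a_sym.
by case: (adj l k) (k \in W) (l \in W) (c k == l) (c l == k) => [] [] [] [] [].
Qed.

Lemma reinforcement_adj k l : ~~ adj k l -> reinforcement k l = 0.
Proof. by rewrite /reinforcement => /negbTE ->. Qed.

Lemma reinforcement_active : (forall U, 0 <= p U) -> 0 < p W ->
  forall k l, reinforcement k l != 0 -> 0 < a k l * pedge adj p k l.
Proof.
move=> p0 pW k l; rewrite /reinforcement.
case: ifP => [/and5P [kl kW lW _ _] ak0|]; last by rewrite eqxx.
rewrite mulr_gt0 //; first by rewrite lt_def ak0 a_ge0.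
rewrite /pedge kl (bigD1 W) /=; last by rewrite kW lW.
by rewrite ltr_wpDr // sumr_ge0.
Qed.

End Reinforcement.

Lemma step_reinforcement {R : realFieldType} {T : finType} {adj : rel T}
    {a : T -> T -> R} {p : {ffun {set T} -> R}} {V V' : T -> T -> R} :
  step adj a p V V' -> exists W c, 0 < p W /\
    forall k l, V' k l = V k l + reinforcement adj a W c k l.
Proof. by case=> W [pW [c [_ HV]]]; exists W, c. Qed.

Section OneStep.
Context {R : realFieldType} {T : finType} {adj : rel T} {a : T -> T -> R}.
Context {p : {ffun {set T} -> R}} {v0 V V' D : T -> T -> R}.
Hypotheses (a_ge0 : forall k l, 0 <= a k l) (p_ge0 : forall U, 0 <= p U)
  (p_sum1 : \sum_U p U = 1).
Hypotheses (V'E : forall k l, V' k l = V k l + D k l)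
  (D_ge0 : forall k l, 0 <= D k l) (D_le : forall k l, D k l <= a k l)
  (D_sym : forall k l, D k l = D l k) (D_adj : forall k l, ~~ adj k l -> D k l = 0)
  (D_active : forall k l, D k l != 0 -> 0 < a k l * pedge adj p k l).
Hypotheses (x_inDelta : inDelta adj a p v0 (normalize V)) (t_gt0 : 0 < total_mass V).

Let t_neq0 : total_mass V != 0 := lt0r_neq0 t_gt0.

Let V_ge0 k l : 0 <= V k l.
Proof.
by case: x_inDelta => _ x0 _ _ _; rewrite -(normalizeK V k l t_neq0) mulr_ge0 // ltW.
Qed.

Let V_sym k l : V k l = V l k.
Proof. by case: x_inDelta => xs _ _ _ _; rewrite -!(normalizeK V _ _ t_neq0) xs. Qed.

Let V'_ge0 k l : 0 <= V' k l.
Proof. by rewrite V'E addr_ge0. Qed.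

Let V'_sym k l : V' k l = V' l k.
Proof. by rewrite !V'E V_sym D_sym. Qed.

Let V'_ge_V k l : V k l <= V' k l.
Proof. by rewrite V'E lerDl. Qed.

Let t'E : total_mass V' = total_mass V + total_mass D := total_mass_add V V' D V'E.

Let t'_gt0 : 0 < total_mass V'.
Proof. by rewrite t'E ltr_wpDr // total_mass_ge0. Qed.

Lemma active_mass_step :
  active_mass adj a p V' = active_mass adj a p V + total_mass D.
Proof.
rewrite /active_mass /total_mass -big_split; apply: eq_bigr => k _.
rewrite -big_split; apply: eq_bigr => l _ /=; rewrite V'E.
case: ifP => [_ //|act]; have [->|/D_active] := eqVneq (D k l) 0.
  by rewrite addr0.
by rewrite act.
Qed.

Lemma inDelta_step : inDelta adj a p v0 (normalize V').
Proof.
case: x_inDelta => _ _ x_adj _ x_active; split.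
- by move=> k l; rewrite /normalize V'_sym.
- by move=> k l; rewrite /normalize divr_ge0 // ltW.
- move=> k l kl; rewrite /normalize V'E D_adj // addr0.
  by rewrite -(normalizeK V k l t_neq0) x_adj // !mul0r.
- exact/total_mass_normalize/lt0r_neq0.
apply: le_trans x_active _.
rewrite !active_mass_normalize active_mass_step t'E.
set A := active_mass _ _ _ V; set d := total_mass D.
have d0 : 0 <= d by rewrite total_mass_ge0.
have A_le_t : A <= total_mass V.
  by apply: ler_sum => k _; apply: ler_sum => l _; case: ifP.
rewrite ler_pdivlMr ?ltr_wpDr // (_ : A / _ * _ = A + A / total_mass V * d).
  by rewrite lerD2l ler_piMl // ler_pdivrMr // mul1r.
by field.
Qed.

Lemma normalize_step_le i j :
  normalize V' i j <= normalize V i j + total_mass a / total_mass V.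
Proof.
rewrite /normalize -mulrDl ler_pM ?addr_ge0 ?invr_ge0 ?(ltW t'_gt0) //.
  by rewrite V'E lerD2l (le_trans (D_le i j)) // entry_le_total_mass.
by rewrite lef_pV2 ?posrE // t'E lerDl total_mass_ge0.
Qed.

Lemma yfun_step_ge i j eps : 0 < eps -> eps * total_mass V <= V i j ->
  4 * total_mass a ^+ 2 / eps ^+ 3 <= total_mass V ->
  yfun adj a p (normalize V) i j - eps / 2 <= yfun adj a p (normalize V') i j.
Proof.
move=> e0 et_le_v t_large.
set S := total_mass a; set c := a i j * pedge adj p i j.
have v_gt0 : 0 < V i j by apply: lt_le_trans et_le_v; rewrite mulr_gt0.
have v'_gt0 : 0 < V' i j by rewrite V'E ltr_wpDr.
have ri := entry_le_rowsum V i j V_ge0.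
have rj : V i j <= rowsum V j by rewrite V_sym entry_le_rowsum.
have r'i := entry_le_rowsum V' i j V'_ge0.
have r'j : V' i j <= rowsum V' j by rewrite V'_sym entry_le_rowsum.
have rowD_le k : rowsum V' k <= rowsum V k + S.
  rewrite (rowsum_add V V' D k V'E) lerD2l.
  by apply: le_trans (rowsum_le_total_mass a k a_ge0); apply: ler_sum => l _.
have c0 : 0 <= c by rewrite mulr_ge0 ?pedge_ge0.
have cS : c <= S.
  by rewrite (le_trans _ (entry_le_total_mass a i j a_ge0)) // ler_piMr ?pedge_le1.
have t_le_t' : total_mass V <= total_mass V' by rewrite t'E lerDl total_mass_ge0.
have ri0 := lt_le_trans v_gt0 ri; have rj0 := lt_le_trans v_gt0 rj.
have r'i0 := lt_le_trans v'_gt0 r'i; have r'j0 := lt_le_trans v'_gt0 r'j.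
have drop := ratio_drop_le e0 c0 cS t_gt0 et_le_v ri rj t_large.
have shift := ratio_le_shift c0 (ltW v_gt0) (V'_ge_V i j) (ltW t_gt0) t_le_t'
  r'i0 (rowD_le i) r'j0 (rowD_le j).
rewrite !yfun_normalize ?gt_eqF //.
by move: drop shift; rewrite /c /S; lra.
Qed.

End OneStep.

Theorem lemma7 (R : realFieldType) (T : finType) (adj : rel T)
  (adj_sym : symmetric adj) (adj_irr : irreflexive adj)
  (a : T -> T -> R)
  (a_sym : forall i j, a i j = a j i)
  (a_ge0 : forall i j, 0 <= a i j)
  (a_adj : forall i j, 0 < a i j -> adj i j) :
  forall eps : R, 0 < eps ->
  exists C : R, 0 < C /\
  forall (p : {ffun {set T} -> R}) (v0 : T -> T -> R),
    (forall W, 0 <= p W) ->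
    \sum_(W : {set T}) p W = 1 ->
    (exists i j, 0 < a i j * pedge adj p i j) ->
    (forall i j, v0 i j = v0 j i) ->
    (forall i j, 0 <= v0 i j) ->
    (forall i j, 0 < v0 i j <-> adj i j) ->
  forall (V : nat -> T -> T -> R), is_path adj a p v0 V ->
  forall (i j : T) (n : nat), adj i j ->
    C <= total_mass (V n) ->
    Uset adj a p v0 i j eps (normalize (V n)) ->
    `| Hfun adj a p (normalize (V n.+1)) - Hfun adj a p (normalize (V n)) | < eps / 2 ->
    Uset adj a p v0 i j (2 * eps) (normalize (V n.+1)).
Proof.
move=> eps e0; set S := total_mass a.
have S0 : 0 <= S := total_mass_ge0 a a_ge0.
have S_eps0 : 0 <= S / eps by rewrite divr_ge0 // ltW.
have S2_eps0 : 0 <= 4 * S ^+ 2 / eps ^+ 3 by rewrite !divr_ge0 ?mulr_ge0 ?exprn_ge0 // ltW.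
exists (1 + S / eps + 4 * S ^+ 2 / eps ^+ 3); split; first by lra.
move=> p v0 p_ge0 p_sum1 _ _ _ _ V [_ V_step] i j n _ C_le [x_inDelta x_cond] dH.
have [W [c [pW V'E]]] := step_reinforcement (V_step n).
have t_gt0 : 0 < total_mass (V n) by lra.
have t_large : 4 * S ^+ 2 / eps ^+ 3 <= total_mass (V n) by lra.
set D := reinforcement adj a W c in V'E.
have D_ge0 : forall k l, 0 <= D k l := reinforcement_ge0 a_ge0.
have D_le : forall k l, D k l <= a k l := reinforcement_le a_ge0.
have D_sym : forall k l, D k l = D l k := reinforcement_sym adj_sym a_sym.
have D_adj : forall k l, ~~ adj k l -> D k l = 0 := reinforcement_adj.
have D_active : forall k l, D k l != 0 -> 0 < a k l * pedge adj p k l :=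
  reinforcement_active a_ge0 p_ge0 pW.
split; first exact: inDelta_step V'E D_ge0 D_sym D_adj D_active x_inDelta t_gt0.
have dH' := le_lt_trans (ler_norm _) dH.
have [x_small | x_large] := ltP (normalize (V n) i j) eps.
  left; have := normalize_step_le a_ge0 V'E D_ge0 D_le x_inDelta t_gt0 i j.
  have : S / total_mass (V n) <= eps by rewrite ler_pdivrMr // -ler_pdivrMl //; lra.
  rewrite -/S; lra.
right; case: x_cond => [|y_cond]; first by rewrite ltNge x_large.
have et_le_v : eps * total_mass (V n) <= V n i j by rewrite -ler_pdivlMr.
have := yfun_step_ge a_ge0 p_ge0 p_sum1 V'E D_ge0 D_le D_sym x_inDelta t_gt0
  i j eps e0 et_le_v t_large.
lra.
Qed.
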